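(* Let $W=\langle s,t: s^2=t^2=(st)^m=1\rangle$ be a Coxeter group of rank $2$ with $m\ge2$ the order of $st$. Then the element $a_sa_t$ generates the top (degree $2$) component of the Orlik–Solomon algebra $A(W)$ as a right $\mathbb CW$-module.
   Context: $W$ acts as a reflection group on $\mathbb C^2$; $T$ is its set of reflections and $H_t$ the reflecting hyperplane of $t\in T$. $A(W)$ is the $\mathbb C$-algebra generated by $a_t$ ($t\in T$) subject to $a_ta_{t'}=-a_{t'}a_t$ and $\sum_{i=1}^p(-1)^ia_{t_1}\cdots\widehat{a_{t_i}}\cdots a_{t_p}=0$ whenever $\{H_{t_1},\dots,H_{t_p}\}$ is linearly dependent; $W$ acts by $a_t.w=a_{w^{-1}tw}$ extended to algebra automorphisms. The degree $2$ component is spanned by products $a_{t}a_{t'}$ with $H_t\ne H_{t'}$. *)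

From HB Require Import structures.
From mathcomp Require Import all_boot all_order all_algebra.
Set Implicit Arguments. Unset Strict Implicit. Unset Printing Implicit Defensive.
Import Order.TTheory GRing.Theory Num.Theory.
Local Open Scope ring_scope.

(* Dihedral group W of order 2m acting as a reflection group on C^2
   (row vectors, v |-> v *m w), built from a primitive m-th root of unity z:
     rotation  rot k  = diag(z^k, z^-k),
     reflection refl k = [[0, z^k], [z^-k, 0]]   (k < m).
   refl 0 * refl 1 = rot (-1) has order m, so s := refl 0, t := refl 1 are
   Coxeter generators with s^2 = t^2 = (st)^m = 1. *)

Section Dihedral.
Variables (C : numClosedFieldType) (m : nat) (z : C).

Definition rot (k : nat) : 'M[C]_2 :=
  \matrix_(i < 2, j < 2)
     (if i == j then (if i == 0 :> nat then z ^+ k else (z ^+ k)^-1) else 0).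

Definition refl (k : nat) : 'M[C]_2 :=
  \matrix_(i < 2, j < 2)
     (if i == j then 0 else (if i == 0 :> nat then z ^+ k else (z ^+ k)^-1)).

Definition Wgrp : seq 'M[C]_2 :=
  [seq rot k | k <- iota 0 m] ++ [seq refl k | k <- iota 0 m].

(* The set T of reflections of W, indexed by 'I_m : t_k = refl k. *)

Definition hyp (k : 'I_m) : 'M[C]_2 := kermx (refl k - 1%:M).

(* {H_{t_1},...,H_{t_p}} linearly dependent: codim of the intersection < p. *)
Definition hyp_dep (ks : seq 'I_m) : bool :=
  (2 - \rank (\bigcap_(k <- ks) hyp k)%MS < size ks)%N.

Definition actT (w : 'M[C]_2) (k : 'I_m) : 'I_m :=
  odflt k [pick k' : 'I_m | refl k' == invmx w *m refl k *m w].

(* Degree-2 part of the free (tensor) algebra on the a_t: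
   an element x : 'M[C]_(m,m) stands for \sum_{k,l} x k l a_{t_k} a_{t_l}. *)
Definition e2 (k l : 'I_m) : 'M[C]_(m, m) := delta_mx k l.

Definition act2 (x : 'M[C]_(m, m)) (w : 'M[C]_2) : 'M[C]_(m, m) :=
  \sum_(k < m) \sum_(l < m) x k l *: e2 (actT w k) (actT w l).

(* Degree-2 component of the two-sided ideal of Orlik-Solomon relations:
   spanned by
   - anticommutators a_k a_l + a_l a_k,
   - degree-2 OS relations (p = 3) for dependent triples,
   - degree-1 OS relations (p = 2) for dependent pairs, multiplied on the
     left or on the right by a generator a_u. *)
Definition anticomm_rels : seq 'M[C]_(m, m) :=
  [seq e2 kl.1 kl.2 + e2 kl.2 kl.1 | kl <- enum [set: 'I_m * 'I_m]].

Definition OS3_rels : seq 'M[C]_(m, m) :=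
  [seq - e2 k.1.2 k.2 + e2 k.1.1 k.2 - e2 k.1.1 k.1.2
   | k <- enum [set: ('I_m * 'I_m) * 'I_m]
   & hyp_dep [:: k.1.1; k.1.2; k.2]].

Definition OS2_rels : seq 'M[C]_(m, m) :=
  [seq - e2 k.1.2 k.2 + e2 k.1.1 k.2
   | k <- enum [set: ('I_m * 'I_m) * 'I_m] & hyp_dep [:: k.1.1; k.1.2]]
  ++
  [seq - e2 k.2 k.1.2 + e2 k.2 k.1.1
   | k <- enum [set: ('I_m * 'I_m) * 'I_m] & hyp_dep [:: k.1.1; k.1.2]].

Definition OS_ideal2 : {vspace 'M[C]_(m, m)} :=
  (<< anticomm_rels >> + << OS3_rels >> + << OS2_rels >>)%VS.

(* A(W)_2 = 'M_(m,m) / OS_ideal2.  x generates A(W)_2 as a right CW-module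
   iff the images of the x.w (w in W) span A(W)_2. *)
Definition generates_top (x : 'M[C]_(m, m)) : Prop :=
  (<< [seq act2 x w | w <- Wgrp] >> + OS_ideal2)%VS = fullv.

End Dihedral.

From Pilot Require Import Defs.
From HB Require Import structures.
From mathcomp Require Import all_boot all_order all_algebra.
From mathcomp Require Import ring zify.
Set Implicit Arguments. Unset Strict Implicit. Unset Printing Implicit Defensive.
Import Order.TTheory GRing.Theory Num.Theory.
Local Open Scope ring_scope.

(* Modulo the Orlik-Solomon relations, [a_k a_l] is antisymmetric, and the
   degree-2 relation for the triple (a, b, c), dependent since we are in rank 2,
   gives [a_a a_c = a_a a_b + a_b a_c]; so every [a_k a_l] is a telescoping sum
   of the consecutive products [a_i a_(i+1)] (indices mod m).  Conjugating
   [(t_0, t_1)] by the rotation [rot (-q)] gives [(t_2q, t_2q+1)], and by the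
   reflection [t_(q+1)] gives [(t_2q+2, t_2q+1)], so the W-orbit of [a_0 a_1]
   reaches every consecutive product up to sign. *)

Section OrlikSolomonDegree2.
Variables (C : numClosedFieldType) (m : nat) (z : C).
Variable U : {vspace 'M[C]_(m, m)}.
Hypothesis sOS_U : (OS_ideal2 m z <= U)%VS.

Lemma e2_anticomm_in (a b : 'I_m) : e2 C a b + e2 C b a \in U.
Proof.
apply: (subvP sOS_U); rewrite /OS_ideal2 -addvA; apply: (subvP (addvSl _ _)).
apply: memv_span; apply: (map_f (fun kl : 'I_m * 'I_m => _) (x := (a, b))).
by rewrite mem_enum in_setT.
Qed.

Lemma e2_OS3_in (a b c : 'I_m) : - e2 C b c + e2 C a c - e2 C a b \in U.
Proof.
apply: (subvP sOS_U); rewrite /OS_ideal2; apply: (subvP (addvSl _ _)).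
apply: (subvP (addvSr _ _)); apply: memv_span.
apply: (map_f (fun k : ('I_m * 'I_m) * 'I_m => _) (x := (a, b, c))).
rewrite mem_filter mem_enum in_setT andbT /hyp_dep /=.
exact: leq_ltn_trans (leq_subr _ _) _.
Qed.

Lemma e2_diag_in (a : 'I_m) : e2 C a a \in U.
Proof. by have := e2_OS3_in a a a; rewrite addNr sub0r memvN. Qed.

Lemma e2_sym_in (a b : 'I_m) : e2 C a b \in U -> e2 C b a \in U.
Proof.
by move=> ab; rewrite -(addKr (e2 C a b) (e2 C b a)) memvD ?memvN ?e2_anticomm_in.
Qed.

Lemma e2_trans_in (a b c : 'I_m) :
  e2 C a b \in U -> e2 C b c \in U -> e2 C a c \in U.
Proof.
move=> ab bc; have := memvD (memvD (e2_OS3_in a b c) ab) bc.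
by rewrite subrK addrC addNKr.
Qed.

End OrlikSolomonDegree2.

Lemma mx2_ext (R : Type) (A B : 'M[R]_2) :
  A 0 0 = B 0 0 -> A 0 1 = B 0 1 -> A 1 0 = B 1 0 -> A 1 1 = B 1 1 -> A = B.
Proof.
move=> h00 h01 h10 h11; apply/matrixP => -[[|[|i]] Hi] // -[[|[|j]] Hj] //.
- by move: h00; congr (_ = _); congr (_ _ _); apply: val_inj.
- by move: h01; congr (_ = _); congr (_ _ _); apply: val_inj.
- by move: h10; congr (_ = _); congr (_ _ _); apply: val_inj.
- by move: h11; congr (_ = _); congr (_ _ _); apply: val_inj.
Qed.

Lemma act2_e2 (C : numClosedFieldType) (m : nat) (z : C) w (a b : 'I_m) :
  act2 z (e2 C a b) w = e2 C (actT z w a) (actT z w b).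
Proof.
rewrite /act2 (bigD1 a) //= (bigD1 b) //= big1 => [|l lb]; last first.
  by rewrite mxE eqxx (negbTE lb) andbF scale0r.
rewrite big1 => [|k ka]; last first.
  by rewrite big1 // => l _; rewrite mxE (negbTE ka) scale0r.
by rewrite mxE !eqxx scale1r !addr0.
Qed.

Lemma mulmx1_invmx (R : comUnitRingType) (n : nat) (A B : 'M[R]_n) :
  A *m B = 1%:M -> invmx A = B.
Proof.
move=> AB; have [uA _] := mulmx1_unit AB.
by rewrite -[invmx A]mulmx1 -AB mulmxA mulVmx // mul1mx.
Qed.

Lemma span_e2_full (C : numClosedFieldType) (m : nat) (U : {vspace 'M[C]_(m, m)}) :
  (forall a b, e2 C a b \in U) -> U = fullv.
Proof.
move=> e2U; apply/eqP; rewrite eqEsubv subvf; apply/subvP => x _.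
rewrite (matrix_sum_delta x); apply: memv_suml => i _; apply: memv_suml => j _.
exact/memvZ/e2U.
Qed.

Section Dihedral.
Variables (C : numClosedFieldType) (m : nat) (z : C).
Hypotheses (hm : (1 < m)%N) (hz : m.-primitive_root z).

Lemma z_expr_neq0 k : z ^+ k != 0.
Proof.
apply: expf_neq0; apply/eqP => z0; have := prim_expr_order hz.
by rewrite z0 expr0n gtn_eqF ?(ltnW hm) // => /eqP; rewrite eq_sym oner_eq0.
Qed.

Ltac mx2_compute :=
  apply: mx2_ext; rewrite !mxE !big_ord_recl big_ord0 /= !mxE
    ?big_ord_recl ?big_ord0 /= ?mxE /= ?(mul0r, mulr0, add0r, addr0).

Lemma refl_conj j k n : z ^+ n * z ^+ k = z ^+ j * z ^+ j ->
  refl z j *m refl z k *m refl z j = refl z n.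
Proof.
move=> e; have hk := z_expr_neq0 k; have hj := z_expr_neq0 j.
have zn : z ^+ n = z ^+ j * z ^+ j / z ^+ k by rewrite -e mulfK.
by mx2_compute; rewrite ?zn //; field; rewrite ?hj ?hk.
Qed.

Lemma rot_conj a b k n : z ^+ a * z ^+ b = 1 -> z ^+ n = z ^+ k * z ^+ b * z ^+ b ->
  Defs.rot z b *m refl z k *m Defs.rot z a = refl z n.
Proof.
move=> ab zn; have hk := z_expr_neq0 k; have hb := z_expr_neq0 b.
have za : z ^+ a = (z ^+ b)^-1 by rewrite -[z ^+ a](mulfK hb) ab mul1r.
by mx2_compute; rewrite ?zn ?za //; field; rewrite ?hb ?hk.
Qed.

Lemma invmx_rot a b : z ^+ a * z ^+ b = 1 -> invmx (Defs.rot z a) = Defs.rot z b.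
Proof.
move=> ab; apply: mulmx1_invmx; have hb := z_expr_neq0 b.
have za : z ^+ a = (z ^+ b)^-1 by rewrite -[z ^+ a](mulfK hb) ab mul1r.
by mx2_compute; rewrite ?za //; field.
Qed.

Lemma invmx_refl j : invmx (refl z j) = refl z j.
Proof.
apply: mulmx1_invmx; have hj := z_expr_neq0 j.
by mx2_compute; field.
Qed.

Lemma refl_inj (a b : 'I_m) : refl z a = refl z b -> a = b.
Proof.
move=> /matrixP /(_ 0 1); rewrite !mxE /= => /eqP.
by rewrite (eq_prim_root_expr hz) !modn_small // => /eqP /val_inj.
Qed.

Lemma actT_eq w (k k' : 'I_m) :
  invmx w *m refl z k *m w = refl z k' -> actT z w k = k'.
Proof.
move=> wk; rewrite /actT; case: pickP => [k'' /eqP k''E | /(_ k')].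
  by apply: refl_inj; rewrite k''E wk.
by rewrite wk eqxx.
Qed.

Definition ord_mod (n : nat) : 'I_m := Ordinal (ltn_pmod n (ltnW hm)).

Lemma ord_mod_val (a : 'I_m) : ord_mod a = a.
Proof. by apply: val_inj; rewrite /= modn_small. Qed.

Lemma actT_rot j q (k : 'I_m) : z ^+ j * z ^+ q = 1 ->
  actT z (Defs.rot z j) k = ord_mod (k + q.*2).
Proof.
move=> jq; apply: actT_eq; rewrite (invmx_rot jq).
by rewrite (rot_conj (n := (k + q.*2) %% m) jq) // (prim_expr_mod hz) -addnn !exprD mulrA.
Qed.

Lemma actT_refl j n (k : 'I_m) : z ^+ n * z ^+ k = z ^+ j * z ^+ j ->
  actT z (refl z j) k = ord_mod n.
Proof.
move=> e; apply: actT_eq.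
by rewrite invmx_refl (refl_conj (n := n %% m)) // (prim_expr_mod hz).
Qed.

Let t0 : 'I_m := Ordinal (ltnW hm).
Let t1 : 'I_m := Ordinal hm.

Definition orbit_span : {vspace 'M[C]_(m, m)} :=
  (<< [seq act2 z (e2 C t0 t1) w | w <- Wgrp m z] >> + OS_ideal2 m z)%VS.

Lemma OS_ideal2_sub_orbit : (OS_ideal2 m z <= orbit_span)%VS.
Proof. exact: addvSr. Qed.

Lemma orbit_e2_in w : w \in Wgrp m z ->
  e2 C (actT z w t0) (actT z w t1) \in orbit_span.
Proof.
move=> Ww; rewrite -act2_e2; apply: (subvP (addvSl _ _)).
exact/memv_span/map_f.
Qed.

Lemma e2_succ_in i : (i < m)%N -> e2 C (ord_mod i) (ord_mod i.+1) \in orbit_span.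
Proof.
move=> im; have := odd_double_half i; set q := i./2.
case: (odd i) => /= iE.
- apply: e2_sym_in; first exact: OS_ideal2_sub_orbit.
  have Wq : refl z q.+1 \in Wgrp m z.
    by rewrite mem_cat map_f ?orbT // mem_iota; move: iE im; rewrite -muln2; lia.
  have := orbit_e2_in Wq.
  rewrite (@actT_refl _ i.+1) ?(@actT_refl _ i) //;
    by rewrite -!exprD; congr (_ ^+ _); move: iE; rewrite -muln2 /=; lia.
- have Wq : Defs.rot z ((m - q) %% m) \in Wgrp m z.
    by rewrite mem_cat map_f // mem_iota /= ltn_pmod // (ltnW hm).
  have qE : z ^+ ((m - q) %% m) * z ^+ q = 1.
    rewrite (prim_expr_mod hz) -exprD subnK ?(prim_expr_order hz) //.
    by move: iE im; rewrite -muln2; lia.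
  by have := orbit_e2_in Wq; rewrite !(actT_rot _ qE) /= -iE.
Qed.

Lemma e2_in_orbit (a b : 'I_m) : e2 C a b \in orbit_span.
Proof.
have sOS := OS_ideal2_sub_orbit.
have e2_0 (k : nat) : (k < m)%N -> e2 C t0 (ord_mod k) \in orbit_span.
  elim: k => [_ | k IH km].
    by rewrite (ord_mod_val t0) (e2_diag_in sOS).
  exact: e2_trans_in sOS _ _ _ (IH (ltnW km)) (e2_succ_in (ltnW km)).
have := e2_0 a (ltn_ord a); have := e2_0 b (ltn_ord b); rewrite !ord_mod_val.
by move=> t0b /(e2_sym_in sOS) at0; exact: e2_trans_in sOS _ _ _ at0 t0b.
Qed.

End Dihedral.

Theorem lemma5p9 (C : numClosedFieldType) (m : nat) (z : C)
    (hm : (1 < m)%N) (hz : m.-primitive_root z) :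
  @generates_top C m z
    (@e2 C m (Ordinal (ltnW hm)) (Ordinal hm)).
Proof. exact/span_e2_full/(e2_in_orbit hm hz). Qed.
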